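(* Let $N\ge 1$ and $-\infty<a_i\le b_i<\infty$ with $r_i=(b_i-a_i)/2>0$ for all $i$; set $m_i=(a_i+b_i)/2$, $\Theta=\prod_{i=1}^N[a_i,b_i]$, $T(y)=\sum_{i=1}^N y_i$. Fix a sampling design $p$ with inclusion probabilities $\pi_i=\mathbb P_p(i\in S)>0$ for all $i$, and let $\pi_{ij}=\mathbb P_p(i\in S,\ j\in S)$, $\Delta_{ij}=\pi_{ij}-\pi_i\pi_j$, and $D_\pi=\sum_{i=1}^N r_i^2\frac{1-\pi_i}{\pi_i}$. Let $\widehat T$ be the estimator $\widehat T(y_S)=\sum_{i=1}^N m_i+\sum_{i\in S}\frac{y_i-m_i}{\pi_i}$. The following are equivalent: (i) there exists an unbiased estimator $\delta$ with $\sup_{y\in\Theta}R(\delta,p;y)=D_\pi$; (ii) $\sup_{y\in\Theta}R(\widehat T,p;y)=D_\pi$; (iii) $\Delta_{ij}=0$ for every $i\ne j$.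
   Context: A sampling design is a probability distribution $p$ on the subsets $s\subseteq\{1,\dots,N\}$; $S$ denotes the random sample drawn from $p$, $\mathbb P_p$ and $\mathbb E_p$ denote probability and expectation with respect to $p$. An estimator $\delta$ is a collection of measurable functions $\delta_s:\Theta_s\to\mathbb R$, one for each subset $s$, where $\Theta_s=\prod_{i\in s}[a_i,b_i]$; for $y\in\Theta$ write $y_s=(y_i)_{i\in s}$. The estimator is unbiased if $\mathbb E_p[\delta_S(y_S)]=T(y)$ for all $y\in\Theta$. The risk is $R(\delta,p;y)=\mathbb E_p[(\delta_S(y_S)-T(y))^2]$. *)

From HB Require Import structures.
From mathcomp Require Import all_boot all_order all_algebra.
From mathcomp Require Import all_classical all_reals all_analysis.
Set Implicit Arguments. Unset Strict Implicit. Unset Printing Implicit Defensive.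
Import Order.TTheory GRing.Theory Num.Theory.
Local Open Scope ring_scope.

(* Population units are indexed by 'I_N (i.e. {0,..,N-1} instead of {1,..,N}).
   A sample is a subset s : {set 'I_N}; a sampling design is a probability
   (mass function) on {set 'I_N}. *)
Definition is_design (R : realType) (N : nat) (p : {ffun {set 'I_N} -> R}) : Prop :=
  (forall s, 0 <= p s) /\ \sum_(s : {set 'I_N}) p s = 1.

Definition incl1 (R : realType) (N : nat) (p : {ffun {set 'I_N} -> R}) (i : 'I_N) : R :=
  \sum_(s : {set 'I_N} | i \in s) p s.
Definition incl2 (R : realType) (N : nat) (p : {ffun {set 'I_N} -> R}) (i j : 'I_N) : R :=
  \sum_(s : {set 'I_N} | (i \in s) && (j \in s)) p s.

Definition Theta (R : realType) (N : nat) (a b : 'I_N -> R) : set ('I_N -> R) :=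
  [set y | forall i, a i <= y i <= b i].
Definition Theta_tuple (R : realType) (N : nat) (a b : 'I_N -> R) : set (N.-tuple R) :=
  [set t | forall i, a i <= tnth t i <= b i].

Definition total (R : realType) (N : nat) (y : 'I_N -> R) : R := \sum_i y i.

(* An estimator: for each sample s a function delta s of y, which only depends
   on y_s = (y_i)_{i in s}, and which is measurable on Theta (for the product
   Borel sigma-algebra on R^N, realised on N.-tuples). *)
Definition is_estimator (R : realType) (N : nat) (a b : 'I_N -> R)
    (delta : {set 'I_N} -> ('I_N -> R) -> R) : Prop :=
  (forall (s : {set 'I_N}) (y y' : 'I_N -> R), (forall i, i \in s -> y i = y' i) ->
      delta s y = delta s y') /\
  (forall s : {set 'I_N}, measurable_fun (Theta_tuple a b) (fun t : N.-tuple R => delta s (tnth t))).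

Definition expect (R : realType) (N : nat) (p : {ffun {set 'I_N} -> R})
    (delta : {set 'I_N} -> ('I_N -> R) -> R) (y : 'I_N -> R) : R :=
  \sum_(s : {set 'I_N}) p s * delta s y.

Definition unbiased (R : realType) (N : nat) (a b : 'I_N -> R) (p : {ffun {set 'I_N} -> R})
    (delta : {set 'I_N} -> ('I_N -> R) -> R) : Prop :=
  forall y, Theta a b y -> expect p delta y = total y.

Definition risk (R : realType) (N : nat) (p : {ffun {set 'I_N} -> R})
    (delta : {set 'I_N} -> ('I_N -> R) -> R) (y : 'I_N -> R) : R :=
  \sum_(s : {set 'I_N}) p s * (delta s y - total y) ^+ 2.

Definition sup_risk (R : realType) (N : nat) (a b : 'I_N -> R) (p : {ffun {set 'I_N} -> R})
    (delta : {set 'I_N} -> ('I_N -> R) -> R) : \bar R :=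
  ereal_sup [set (risk p delta y)%:E | y in Theta a b].

Definition midpoint (R : realType) (N : nat) (a b : 'I_N -> R) (i : 'I_N) : R := (a i + b i) / 2.
Definition half_width (R : realType) (N : nat) (a b : 'I_N -> R) (i : 'I_N) : R := (b i - a i) / 2.

Definition D_pi (R : realType) (N : nat) (a b : 'I_N -> R) (p : {ffun {set 'I_N} -> R}) : R :=
  \sum_i (half_width a b i) ^+ 2 * (1 - incl1 p i) / incl1 p i.

Definition That (R : realType) (N : nat) (a b : 'I_N -> R) (p : {ffun {set 'I_N} -> R})
    (s : {set 'I_N}) (y : 'I_N -> R) : R :=
  \sum_i midpoint a b i + \sum_(i in s) (y i - midpoint a b i) / incl1 p i.

(* Write e_s(y) = T^_s(y) - T(y) = sum_k (y_k - m_k) (1{k in s}/pi_k - 1).  The risk of T^ is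
   the quadratic form sum_kl (y_k - m_k)(y_l - m_l) Delta_kl/(pi_k pi_l), so when the
   Delta_ij (i <> j) vanish it is maximal, equal to D_pi, at y = b: (iii) => (ii).
   For (i) => (iii), average over the 2^N vertices y_A = m + r.sigma_A of Theta, where
   sigma_A is +1 on A and -1 off A.  For an unbiased delta, d = delta - T^ has E_p[d] = 0 at
   each vertex; since d_s only sees the coordinates in s, the vertex average of sigma_k d_s
   vanishes for k outside s, while for k in s the weight of y_k in e_s is 1/pi_k - 1
   whatever s is.  So d is orthogonal to e in the vertex average, and the average risk of
   delta is D_pi plus the average of E_p[d^2].  As sup R(delta) = D_pi,
   d = 0 p-a.s. at every vertex and R(T^, y_A) = D_pi for all A; weighting by
   sigma_A(i) sigma_A(j) then yields 2 r_i r_j Delta_ij/(pi_i pi_j) = 0. *)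

From Pilot Require Import Defs.
From HB Require Import structures.
From mathcomp Require Import all_boot all_order all_algebra.
From mathcomp Require Import all_classical all_reals all_analysis.
From mathcomp Require Import ring lra.
Import Order.TTheory GRing.Theory Num.Theory.
Local Open Scope ring_scope.

Lemma eq_const_of_sum_le {R : numDomainType} {I : finType} (f : I -> R) c :
  (forall i, f i <= c) -> \sum_i f i = #|I|%:R * c -> forall i, f i = c.
Proof.
move=> le_fc sum_f i; apply/eqP; rewrite -subr_eq0 -oppr_eq0 opprB; apply/eqP.
apply: (@psumr_eq0P _ _ xpredT (fun i => c - f i)) => // [j _|].
  by rewrite subr_ge0.
by rewrite sumrB sum_f sumr_const mulr_natl subrr.
Qed.

Lemma iff3_of_cycle (P Q S : Prop) :
  (P -> S) -> (S -> Q) -> (Q -> P) -> [/\ P <-> Q, Q <-> S & P <-> S].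
Proof. by move=> PS SQ QP; split; split; tauto. Qed.

Section Sampling.
Variables (R : realType) (N : nat).

Section SignVectors.
Implicit Types (A : {set 'I_N}) (i j k l : 'I_N) (v : 'I_N -> R).

Definition sgn A k : R := if k \in A then 1 else -1.

Definition toggle k A : {set 'I_N} := [set l | (l == k) (+) (l \in A)].

Lemma toggleK k : involutive (toggle k).
Proof. by move=> A; apply/setP => l; rewrite !inE addbA addbb. Qed.

Lemma sgn_toggle k A l : sgn (toggle k A) l = if l == k then - sgn A l else sgn A l.
Proof. by rewrite /sgn inE; case: eqP => _; case: (l \in A); rewrite ?opprK. Qed.

Lemma sgnP A k : sgn A k = 1 \/ sgn A k = -1.
Proof. by rewrite /sgn; case: ifP; [left | right]. Qed.

Lemma sgn_sq A k : sgn A k * sgn A k = 1.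
Proof. by case: (sgnP A k) => ->; rewrite ?mulrNN mulr1. Qed.

Lemma sum_toggle k (F : {set 'I_N} -> R) : \sum_A F (toggle k A) = \sum_A F A.
Proof. by rewrite [RHS](reindex_inj (can_inj (toggleK k))). Qed.

Lemma sum_sgn_toggle_inv k (F : {set 'I_N} -> R) :
  (forall A, F (toggle k A) = F A) -> \sum_A sgn A k * F A = 0.
Proof.
move=> FtK; have : \sum_A sgn A k * F A = - \sum_A sgn A k * F A.
  rewrite -[LHS](sum_toggle k) -sumrN; apply: eq_bigr => A _.
  by rewrite FtK sgn_toggle eqxx mulNr.
lra.
Qed.

Lemma sum_sgnM k l : \sum_A sgn A k * sgn A l = (k == l)%:R * #|{set 'I_N}|%:R.
Proof.
case: eqVneq => [<- | neq_kl].
  by rewrite mul1r -sumr_const; apply: eq_bigr => A _; rewrite sgn_sq.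
by rewrite mul0r; apply: sum_sgn_toggle_inv => A; rewrite sgn_toggle eq_sym (negbTE neq_kl).
Qed.

Definition sgn_comb v A : R := \sum_k v k * sgn A k.

Lemma sgn_comb_toggle v k A :
  sgn_comb v (toggle k A) = sgn_comb v A - 2 * v k * sgn A k.
Proof.
rewrite /sgn_comb (bigD1 k) //= [in RHS](bigD1 k) //= sgn_toggle eqxx.
under eq_bigr => l /negbTE neq_lk do rewrite sgn_toggle neq_lk.
ring.
Qed.

Lemma sum_sgnM_comb v k : \sum_A sgn A k * sgn_comb v A = #|{set 'I_N}|%:R * v k.
Proof.
transitivity (\sum_l v l * \sum_A sgn A k * sgn A l).
  under eq_bigr do rewrite /sgn_comb mulr_sumr.
  rewrite exchange_big; apply: eq_bigr => l _ /=; rewrite mulr_sumr.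
  by apply: eq_bigr => A _; rewrite mulrCA.
rewrite (bigD1 k) //= sum_sgnM eqxx mul1r big1 ?addr0; first by rewrite mulrC.
by move=> l neq_lk; rewrite sum_sgnM eq_sym (negbTE neq_lk) mul0r mulr0.
Qed.

Lemma sum_sgn_comb_sq v : \sum_A sgn_comb v A ^+ 2 = #|{set 'I_N}|%:R * \sum_k v k ^+ 2.
Proof.
transitivity (\sum_k \sum_A v k * (sgn A k * sgn_comb v A)).
  rewrite exchange_big; apply: eq_bigr => A _ /=.
  by rewrite expr2 {1}/sgn_comb mulr_suml; apply: eq_bigr => k _; rewrite mulrA.
rewrite mulr_sumr; apply: eq_bigr => k _; rewrite -mulr_sumr sum_sgnM_comb; ring.
Qed.

Lemma sum_sgn_comb_sq_sgnM v i j : i != j ->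
  \sum_A sgn_comb v A ^+ 2 * (sgn A i * sgn A j) = #|{set 'I_N}|%:R * (2 * v i * v j).
Proof.
move=> neq_ij; pose G A := sgn_comb v A ^+ 2 * (sgn A i * sgn A j).
rewrite -[LHS]/(\sum_A G A).
(* pairing A with [toggle i A] kills every term of the square except the cross term *)
have pairG A : G A + G (toggle i A) =
    4 * v i * (sgn A j * sgn_comb v A) - 4 * v i ^+ 2 * (sgn A i * sgn A j).
  rewrite /G sgn_comb_toggle !sgn_toggle eqxx eq_sym (negbTE neq_ij).
  by case: (sgnP A i) => ->; ring.
have : 2 * \sum_A G A = \sum_A
    (4 * v i * (sgn A j * sgn_comb v A) - 4 * v i ^+ 2 * (sgn A i * sgn A j)).
  by rewrite -(eq_bigr _ (fun A _ => pairG A)) big_split /= sum_toggle; ring.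
rewrite sumrB -!mulr_sumr sum_sgnM_comb sum_sgnM (negbTE neq_ij) mul0r mulr0 subr0 => sumG2.
apply: (@mulfI _ 2); first by rewrite pnatr_eq0.
by rewrite sumG2; ring.
Qed.

End SignVectors.

Section Design.
Variable p : {ffun {set 'I_N} -> R}.
Hypotheses (p_design : is_design p) (incl1_gt0 : forall i, 0 < incl1 p i).
Implicit Types (s : {set 'I_N}) (i j k l : 'I_N).

Definition incl_cov i j : R := incl2 p i j - incl1 p i * incl1 p j.

Definition ht_weight s i : R := (i \in s)%:R / incl1 p i - 1.

Lemma sum_p_indicator i : \sum_s p s * (i \in s)%:R = incl1 p i.
Proof.
by rewrite /incl1 [RHS]big_mkcond; apply: eq_bigr => s _; case: (i \in s); rewrite ?mulr1 ?mulr0.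
Qed.

Lemma sum_p_indicatorM k l : \sum_s p s * ((k \in s)%:R * (l \in s)%:R) = incl2 p k l.
Proof.
rewrite /incl2 [RHS]big_mkcond; apply: eq_bigr => s _.
by case: (k \in s); case: (l \in s); rewrite ?mulr1 ?mulr0 ?mul0r.
Qed.

Lemma incl_cov_diag k : incl_cov k k = incl1 p k * (1 - incl1 p k).
Proof.
by rewrite /incl_cov /incl2 (eq_bigl (fun s => k \in s)) => [|s]; rewrite ?andbb // mulrBr mulr1.
Qed.

Lemma incl1_le1 i : incl1 p i <= 1.
Proof.
case: p_design => p_ge0 <-; rewrite /incl1 [leRHS](bigID (fun s => i \in s)) /= lerDl.
exact: sumr_ge0.
Qed.

Lemma expect_ht_weight k : \sum_s p s * ht_weight s k = 0.
Proof.
under eq_bigr do rewrite /ht_weight mulrBr mulr1 mulrA.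
by rewrite sumrB -mulr_suml sum_p_indicator mulfV ?gt_eqF // p_design.2 subrr.
Qed.

Lemma expect_ht_weightM k l :
  \sum_s p s * (ht_weight s k * ht_weight s l) = incl_cov k l / (incl1 p k * incl1 p l).
Proof.
have [nz_k nz_l] : incl1 p k != 0 /\ incl1 p l != 0 by rewrite !gt_eqF.
transitivity (\sum_s (p s * ((k \in s)%:R * (l \in s)%:R) / (incl1 p k * incl1 p l)
  - p s * (k \in s)%:R / incl1 p k - p s * (l \in s)%:R / incl1 p l + p s)).
  by apply: eq_bigr => s _; rewrite /ht_weight; field; rewrite nz_k nz_l.
rewrite big_split /= !sumrB -!mulr_suml.
rewrite sum_p_indicatorM !sum_p_indicator p_design.2 /incl_cov; field.
by rewrite nz_k nz_l.
Qed.

Variables (a b : 'I_N -> R).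
Implicit Types (y : 'I_N -> R).

Lemma That_sub_total s y :
  That a b p s y - Defs.total y = \sum_i (y i - midpoint a b i) * ht_weight s i.
Proof.
rewrite /That /Defs.total.
have -> : \sum_(i in s) (y i - midpoint a b i) / incl1 p i =
    \sum_i (y i - midpoint a b i) * ((i \in s)%:R / incl1 p i).
  rewrite big_mkcond /=; apply: eq_bigr => i _.
  by case: (i \in s); rewrite ?mul1r ?mul0r ?mulr0.
under [RHS]eq_bigr do rewrite mulrBr mulr1.
rewrite !sumrB; ring.
Qed.

Lemma That_local s y y' :
  (forall i, i \in s -> y i = y' i) -> That a b p s y = That a b p s y'.
Proof. by move=> eq_ys; rewrite /That; congr (_ + _); apply: eq_bigr => i /eq_ys ->. Qed.

Lemma That_is_estimator : is_estimator a b (That a b p).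
Proof.
split=> [s y y' |s]; first exact: That_local.
apply: (measurable_funS measurableT (@subsetT _ _)).
apply: measurable_realfun.measurable_funD; first exact: measurable_cst.
under eq_fun do rewrite big_mkcond /=.
apply: measurable_sum => i; case: (i \in s); last exact: measurable_cst.
apply: measurable_realfun.measurable_funM; last exact: measurable_cst.
apply: measurable_realfun.measurable_funB; [exact: measurable_tnth | exact: measurable_cst].
Qed.

Lemma expect_That y : expect p (That a b p) y = Defs.total y.
Proof.
transitivity (\sum_s (p s * Defs.total y +
                      \sum_i (y i - midpoint a b i) * (p s * ht_weight s i))).
  apply: eq_bigr => s _.
  rewrite -[That _ _ _ _ _](subrK (Defs.total y)) That_sub_total mulrDr mulr_sumr addrC.
  by congr (_ + _); apply: eq_bigr => i _; rewrite mulrCA.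
rewrite big_split /= -mulr_suml p_design.2 mul1r exchange_big /= big1 ?addr0 // => i _.
by rewrite -mulr_sumr expect_ht_weight mulr0.
Qed.

Lemma risk_That y : risk p (That a b p) y = \sum_k \sum_l
  (y k - midpoint a b k) * (y l - midpoint a b l) * (incl_cov k l / (incl1 p k * incl1 p l)).
Proof.
rewrite /risk; under eq_bigr do rewrite That_sub_total expr2 big_distrlr /= mulr_sumr.
rewrite exchange_big; apply: eq_bigr => k _ /=.
under eq_bigr do rewrite mulr_sumr.
rewrite exchange_big; apply: eq_bigr => l _ /=.
rewrite -expect_ht_weightM mulr_sumr; apply: eq_bigr => s _; ring.
Qed.

Lemma risk_That_uncorrelated y : (forall k l, k != l -> incl_cov k l = 0) ->
  risk p (That a b p) y = \sum_k (y k - midpoint a b k) ^+ 2 * (1 - incl1 p k) / incl1 p k.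
Proof.
move=> cov0; rewrite risk_That; apply: eq_bigr => k _.
rewrite (bigD1 k) //= big1 ?addr0 => [|l neq_lk]; last by rewrite cov0 1?eq_sym ?mul0r ?mulr0.
by rewrite incl_cov_diag; field; rewrite gt_eqF.
Qed.

Lemma sup_risk_That_uncorrelated : (forall i, a i <= b i) ->
  (forall k l, k != l -> incl_cov k l = 0) -> sup_risk a b p (That a b p) = (D_pi a b p)%:E.
Proof.
move=> le_ab cov0; apply/eqP; rewrite eq_le; apply/andP; split.
  apply: ge_ereal_sup => _ [y Theta_y <-]; rewrite lee_fin risk_That_uncorrelated // /D_pi.
  apply: ler_sum => k _; apply: ler_wpM2r; first by rewrite invr_ge0 ltW.
  apply: ler_wpM2r; first by rewrite subr_ge0 incl1_le1.
  have /andP[a_le_y y_le_b] := Theta_y k.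
  by rewrite /midpoint /half_width; nra.
apply: ereal_sup_ubound; exists b; first by move=> k; rewrite le_ab lexx.
rewrite risk_That_uncorrelated //; congr (_%:E); apply: eq_bigr => k _.
by rewrite /midpoint /half_width; congr (_ * _ / _); field.
Qed.

Lemma risk_le_sup_risk delta c y :
  sup_risk a b p delta = c%:E -> Theta a b y -> risk p delta y <= c.
Proof. by move=> sup_c Theta_y; rewrite -lee_fin -sup_c; apply: ereal_sup_ubound; exists y. Qed.

Lemma risk_split delta delta' y : risk p delta y = risk p delta' y
  + 2 * \sum_s p s * ((delta s y - delta' s y) * (delta' s y - Defs.total y))
  + \sum_s p s * (delta s y - delta' s y) ^+ 2.
Proof. by rewrite /risk mulr_sumr -!big_split; apply: eq_bigr => s _ /=; ring. Qed.

Lemma risk_eq_of_dev_eq0 delta delta' y :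
  \sum_s p s * (delta s y - delta' s y) ^+ 2 = 0 -> risk p delta y = risk p delta' y.
Proof.
move=> dev0; apply: eq_bigr => s _.
have /eqP := psumr_eq0P (fun s _ => mulr_ge0 (p_design.1 s) (sqr_ge0 _)) dev0 (i := s) isT.
by rewrite mulf_eq0 sqrf_eq0 subr_eq0 => /orP[/eqP -> | /eqP ->]; rewrite ?mul0r.
Qed.

Hypothesis half_width_gt0 : forall i, 0 < half_width a b i.
Implicit Types (A : {set 'I_N}).

Definition vertex A k : R := midpoint a b k + half_width a b k * sgn A k.

Lemma vertex_in_Theta A : Theta a b (vertex A).
Proof.
move=> k; have := half_width_gt0 k; rewrite /vertex /midpoint /half_width.
by case: (sgnP A k) => -> r_gt0; apply/andP; split; lra.
Qed.

Lemma That_sub_total_vertex s A : That a b p s (vertex A) - Defs.total (vertex A) =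
  sgn_comb (fun k => half_width a b k * ht_weight s k) A.
Proof. by rewrite That_sub_total; apply: eq_bigr => k _; rewrite /vertex; ring. Qed.

Lemma sum_risk_That_vertex :
  \sum_A risk p (That a b p) (vertex A) = #|{set 'I_N}|%:R * D_pi a b p.
Proof.
transitivity (\sum_s p s * (#|{set 'I_N}|%:R *
                            \sum_k (half_width a b k * ht_weight s k) ^+ 2)).
  rewrite exchange_big; apply: eq_bigr => s _ /=; rewrite -sum_sgn_comb_sq mulr_sumr.
  by apply: eq_bigr => A _; rewrite That_sub_total_vertex.
transitivity (\sum_k \sum_s #|{set 'I_N}|%:R * half_width a b k ^+ 2 *
                            (p s * (ht_weight s k * ht_weight s k))).
  rewrite exchange_big; apply: eq_bigr => s _ /=; rewrite !mulr_sumr.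
  by apply: eq_bigr => k _; ring.
rewrite /D_pi mulr_sumr; apply: eq_bigr => k _.
by rewrite -mulr_sumr expect_ht_weightM incl_cov_diag; field; rewrite gt_eqF.
Qed.

Lemma sum_risk_That_vertex_sgnM i j : i != j ->
  \sum_A risk p (That a b p) (vertex A) * (sgn A i * sgn A j) =
  #|{set 'I_N}|%:R * (2 * half_width a b i * half_width a b j) *
  (incl_cov i j / (incl1 p i * incl1 p j)).
Proof.
move=> neq_ij.
transitivity (\sum_s p s * \sum_A
  sgn_comb (fun k => half_width a b k * ht_weight s k) A ^+ 2 * (sgn A i * sgn A j)).
  rewrite /risk; under eq_bigr do rewrite mulr_suml.
  rewrite exchange_big; apply: eq_bigr => s _ /=; rewrite mulr_sumr.
  by apply: eq_bigr => A _; rewrite That_sub_total_vertex [RHS]mulrA.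
under eq_bigr do rewrite (sum_sgn_comb_sq_sgnM _ _ _ neq_ij).
by rewrite -expect_ht_weightM !mulr_sumr; apply: eq_bigr => s _; ring.
Qed.

Lemma incl_cov_eq0_of_vertex_risk :
  (forall A, risk p (That a b p) (vertex A) <= D_pi a b p) ->
  forall i j, i != j -> incl_cov i j = 0.
Proof.
move=> le_D i j neq_ij.
have eq_D := eq_const_of_sum_le _ _ le_D sum_risk_That_vertex.
have scale_gt0 : 0 < #|{set 'I_N}|%:R * (2 * half_width a b i * half_width a b j) /
                     (incl1 p i * incl1 p j).
  have nsets_gt0 : 0 < #|{set 'I_N}|%:R :> R.
    by rewrite ltr0n; apply/card_gt0P; exists finset.set0.
  have two_gt0 : 0 < 2 :> R by rewrite ltr0n.
  exact: divr_gt0 (mulr_gt0 nsets_gt0 (mulr_gt0 (mulr_gt0 two_gt0 (half_width_gt0 i))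
    (half_width_gt0 j))) (mulr_gt0 (incl1_gt0 i) (incl1_gt0 j)).
have := sum_risk_That_vertex_sgnM _ _ neq_ij.
under eq_bigr do rewrite eq_D.
rewrite -mulr_sumr sum_sgnM (negbTE neq_ij) mul0r mulr0 => cov_scaled0.
have /eqP : incl_cov i j * (#|{set 'I_N}|%:R * (2 * half_width a b i * half_width a b j) /
                            (incl1 p i * incl1 p j)) = 0.
  by rewrite [RHS]cov_scaled0; ring.
by rewrite mulf_eq0 (gt_eqF scale_gt0) orbF => /eqP.
Qed.

Lemma sum_sgn_local_vertex (f : ('I_N -> R) -> R) s k :
  (forall y y', (forall i, i \in s -> y i = y' i) -> f y = f y') -> k \notin s ->
  \sum_A sgn A k * f (vertex A) = 0.
Proof.
move=> f_local k_notin_s; apply: sum_sgn_toggle_inv => A; apply: f_local => i i_in_s.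
rewrite /vertex sgn_toggle; case: eqP => // eq_ik.
by move: k_notin_s; rewrite -eq_ik i_in_s.
Qed.

Lemma sum_vertex_cross delta : is_estimator a b delta -> unbiased a b p delta ->
  \sum_A \sum_s p s * ((delta s (vertex A) - That a b p s (vertex A)) *
                       (That a b p s (vertex A) - Defs.total (vertex A))) = 0.
Proof.
move=> [delta_local _] delta_unb.
pose d s A := delta s (vertex A) - That a b p s (vertex A).
have unbiased_d A : \sum_s p s * d s A = 0.
  have := delta_unb _ (vertex_in_Theta A); have := expect_That (vertex A).
  by rewrite /expect /d => eT eD; under eq_bigr do rewrite mulrBr; rewrite sumrB eT eD subrr.
(* off the sample the sign average of [d] vanishes, on it [ht_weight] is constant *)
have weight_d s k : ht_weight s k * \sum_A sgn A k * d s A =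
                    ((incl1 p k)^-1 - 1) * \sum_A sgn A k * d s A.
  case: (boolP (k \in s)) => [k_in_s | k_notin_s]; first by rewrite /ht_weight k_in_s mul1r.
  rewrite (sum_sgn_local_vertex (fun y => delta s y - That a b p s y) _ _ _ k_notin_s) ?mulr0 //.
  by move=> y y' eq_y; rewrite (delta_local s y y' eq_y) (That_local _ _ _ eq_y).
transitivity (\sum_s \sum_k p s * half_width a b k *
                (ht_weight s k * \sum_A sgn A k * d s A)).
  rewrite exchange_big; apply: eq_bigr => s _ /=.
  under [RHS]eq_bigr do rewrite !mulr_sumr.
  rewrite exchange_big; apply: eq_bigr => A _ /=.
  rewrite That_sub_total_vertex /sgn_comb !mulr_sumr; apply: eq_bigr => k _.
  by rewrite /d; ring.
under eq_bigr do under eq_bigr do rewrite weight_d.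
rewrite exchange_big; apply: big1 => k _ /=.
under eq_bigr do rewrite !mulr_sumr.
rewrite exchange_big; apply: big1 => A _ /=.
transitivity (half_width a b k * ((incl1 p k)^-1 - 1) * sgn A k * \sum_s p s * d s A).
  by rewrite mulr_sumr; apply: eq_bigr => s _; ring.
by rewrite unbiased_d mulr0.
Qed.

Lemma vertex_risk_That_le delta :
  is_estimator a b delta -> unbiased a b p delta -> sup_risk a b p delta = (D_pi a b p)%:E ->
  forall A, risk p (That a b p) (vertex A) <= D_pi a b p.
Proof.
move=> delta_est delta_unb sup_delta.
have le_D A : risk p delta (vertex A) <= D_pi a b p.
  exact: risk_le_sup_risk sup_delta (vertex_in_Theta A).
pose dev A := \sum_s p s * (delta s (vertex A) - That a b p s (vertex A)) ^+ 2.
have dev_ge0 A : 0 <= dev A.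
  by apply: sumr_ge0 => s _; apply: mulr_ge0; [exact: p_design.1 | exact: sqr_ge0].
have sum_dev : \sum_A dev A = \sum_A risk p delta (vertex A) - #|{set 'I_N}|%:R * D_pi a b p.
  rewrite -sum_risk_That_vertex.
  rewrite (eq_bigr _ (fun A _ => risk_split delta (That a b p) (vertex A))).
  by rewrite !big_split /= -mulr_sumr sum_vertex_cross //; ring.
have sum_dev0 : \sum_A dev A = 0.
  apply/eqP; rewrite eq_le sumr_ge0 // andbT sum_dev subr_le0 mulr_natl -sumr_const.
  exact: ler_sum.
have dev0 A : dev A = 0 := psumr_eq0P (fun A _ => dev_ge0 A) sum_dev0 (i := A) isT.
by move=> A; rewrite -(risk_eq_of_dev_eq0 _ _ _ (dev0 A)).
Qed.

End Design.

End Sampling.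

Theorem theorem2 (R : realType) (N : nat) (a b : 'I_N -> R)
    (p : {ffun {set 'I_N} -> R}) :
  (0 < N)%N ->
  (forall i : 'I_N, a i <= b i) ->
  (forall i : 'I_N, 0 < half_width a b i) ->
  is_design p ->
  (forall i : 'I_N, 0 < incl1 p i) ->
  [/\ ((exists delta, is_estimator a b delta /\ unbiased a b p delta /\
          sup_risk a b p delta = (D_pi a b p)%:E)
       <-> sup_risk a b p (That a b p) = (D_pi a b p)%:E),
      (sup_risk a b p (That a b p) = (D_pi a b p)%:E
       <-> (forall i j : 'I_N, i != j -> incl2 p i j - incl1 p i * incl1 p j = 0)) &
      ((exists delta, is_estimator a b delta /\ unbiased a b p delta /\
          sup_risk a b p delta = (D_pi a b p)%:E)
       <-> (forall i j : 'I_N, i != j -> incl2 p i j - incl1 p i * incl1 p j = 0))].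
Proof.
move=> _ le_ab half_width_gt0 p_design incl1_gt0.
apply: iff3_of_cycle => [[delta [delta_est [delta_unb sup_delta]]] | cov0 | sup_That].
- apply: incl_cov_eq0_of_vertex_risk => //.
  exact: vertex_risk_That_le delta_est delta_unb sup_delta.
- exact: sup_risk_That_uncorrelated.
- exists (That a b p); split; first exact: That_is_estimator.
  by split=> // y _; apply: expect_That.
Qed.
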